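(* Let $r>c>\nu$ and $0<t<r-\nu$, set $R=(r-c)/(r-\nu)$, $\gamma=t/(r-\nu)$, fix $\rho\in[0,1)$, and for each integer $n\ge1$ let $L_n=\sqrt{n/(1+(n-1)\rho)}$ and let $Y_n$ be the unique real solution of $$R=\gamma\,\Phi(Y_n)+(1-\gamma)\,\Phi(L_nY_n),$$ with $\Phi$ the standard normal cdf. If $R>1/2$ (over-mean problem), then $Y_1>Y_2>\dots>Y_n>\dots>0$. If $R<1/2$ (under-mean problem), then $Y_1<Y_2<\dots<Y_n<\dots<0$.
   Context: $Y_n$ is the standardized optimal common order quantity $(X_n-\mu)/\sigma$ of a transshipment coalition of $n$ identical newsvendors (selling price $r$, cost $c$, salvage value $\nu$, unit transportation cost $t$) facing jointly normal demands with mean $\mu$, standard deviation $\sigma$ and common pairwise correlation $\rho$. The right-hand side of the defining equation is strictly increasing in $Y_n$ from $0$ to $1$, so $Y_n$ is well defined. *)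

From Stdlib Require Import Reals Lra.
Open Scope R_scope.

Definition normal_density (x : R) : R := / sqrt (2 * PI) * exp (- (x ^ 2) / 2).

Lemma normal_density_continuity : continuity normal_density.
Proof.
  unfold normal_density.
  apply continuity_mult; [apply continuity_const; intros ? ?; reflexivity |].
  apply (continuity_comp (fun x => - (x ^ 2) / 2) exp).
  - unfold Rdiv. apply continuity_mult.
    + apply continuity_opp. apply derivable_continuous. apply derivable_pow.
    + apply continuity_const; intros ? ?; reflexivity.
  - apply derivable_continuous. apply derivable_exp.
Qed.

Lemma normal_density_integrable (a b : R) : Riemann_integrable normal_density a b.
Proof.
  destruct (Rle_dec a b) as [H | H].
  - apply continuity_implies_RiemannInt; [exact H |].
    intros x _; apply normal_density_continuity.
  - apply RiemannInt_P1. apply continuity_implies_RiemannInt; [lra |].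
    intros x _; apply normal_density_continuity.
Qed.

Definition Phi (x : R) : R := / 2 + RiemannInt (normal_density_integrable 0 x).

Definition crit_ratio (r c nu : R) : R := (r - c) / (r - nu).
Definition gamma_ratio (r nu t : R) : R := t / (r - nu).

Definition L_n (rho : R) (n : nat) : R := sqrt (INR n / (1 + (INR n - 1) * rho)).

From Stdlib Require Import Reals Lra Lia Psatz.
Open Scope R_scope.

(* The right-hand side of the defining equation is strictly increasing in Y_n
   and equals 1/2 at 0, so the sign of Y_n is that of R - 1/2.  For Y > 0 it is
   also strictly increasing in L_n, and L_n increases with n; hence at Y_n the
   (n+1)-st equation already exceeds R, which forces Y_{n+1} < Y_n.  For Y < 0
   everything is reversed. *)

Lemma increasing_reflect_lt (f : R -> R) (a b : R) :
  (forall x y, x < y -> f x < f y) -> f a < f b -> a < b.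
Proof.
  intros f_incr fab.
  destruct (total_order_T a b) as [[ab | ab] | ba]; [exact ab | |].
  - subst b; lra.
  - specialize (f_incr _ _ ba); lra.
Qed.

Lemma normal_density_ge (a z : R) :
  z ^ 2 <= a -> / sqrt (2 * PI) * exp (- a / 2) <= normal_density z.
Proof.
  intros za. unfold normal_density.
  apply Rmult_le_compat_l.
  { left. apply Rinv_0_lt_compat, sqrt_lt_R0. pose proof PI_RGT_0; lra. }
  destruct (Rle_lt_or_eq_dec (- a / 2) (- z ^ 2 / 2)) as [lt | eq]; [lra | |].
  - left; exact (exp_increasing _ _ lt).
  - rewrite eq; lra.
Qed.

Lemma Phi_lt (x y : R) : x < y -> Phi x < Phi y.
Proof.
  intros xy. unfold Phi.
  rewrite <- (RiemannInt_P26 (normal_density_integrable 0 x)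
                (normal_density_integrable x y) (normal_density_integrable 0 y)).
  (* On [x, y] the density is bounded below by a positive constant m. *)
  set (m := / sqrt (2 * PI) * exp (- (x ^ 2 + y ^ 2) / 2)).
  assert (m_pos : 0 < m).
  { unfold m. apply Rmult_lt_0_compat; [| apply exp_pos].
    apply Rinv_0_lt_compat, sqrt_lt_R0. pose proof PI_RGT_0; lra. }
  assert (lower : RiemannInt (RiemannInt_P14 x y m)
                  <= RiemannInt (normal_density_integrable x y)).
  { apply RiemannInt_P19; [lra |].
    intros z xzy. apply normal_density_ge.
    destruct (Rle_dec 0 z); nra. }
  rewrite RiemannInt_P15 in lower.
  assert (0 < m * (y - x)) by (apply Rmult_lt_0_compat; lra).
  lra.
Qed.

Lemma Phi_0 : Phi 0 = / 2.
Proof. unfold Phi. rewrite RiemannInt_P9. lra. Qed.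

Lemma L_n_pos (rho : R) (n : nat) :
  0 <= rho -> rho < 1 -> (1 <= n)%nat -> 0 < L_n rho n.
Proof.
  intros rho0 rho1 n1. unfold L_n. apply sqrt_lt_R0.
  apply le_INR in n1; simpl in n1.
  apply Rdiv_lt_0_compat; nra.
Qed.

Lemma L_n_lt_succ (rho : R) (n : nat) :
  0 <= rho -> rho < 1 -> (1 <= n)%nat -> L_n rho n < L_n rho (S n).
Proof.
  intros rho0 rho1 n1. unfold L_n. rewrite S_INR.
  apply le_INR in n1; simpl in n1.
  set (a := INR n) in *.
  assert (0 < 1 + (a - 1) * rho) by nra.
  assert (0 < 1 + (a + 1 - 1) * rho) by nra.
  apply sqrt_lt_1.
  - left; apply Rdiv_lt_0_compat; lra.
  - left; apply Rdiv_lt_0_compat; lra.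
  - apply (Rmult_lt_reg_r ((1 + (a - 1) * rho) * (1 + (a + 1 - 1) * rho))); [nra |].
    unfold Rdiv. field_simplify; lra.
Qed.

Definition Phi_mixture (g L y : R) : R := g * Phi y + (1 - g) * Phi (L * y).

Lemma Phi_mixture_0 (g L : R) : Phi_mixture g L 0 = / 2.
Proof. unfold Phi_mixture. rewrite Rmult_0_r, Phi_0. lra. Qed.

Lemma Phi_mixture_lt (g L y y' : R) :
  0 <= g <= 1 -> 0 < L -> y < y' -> Phi_mixture g L y < Phi_mixture g L y'.
Proof.
  intros g01 L0 yy'. unfold Phi_mixture.
  pose proof (Phi_lt _ _ yy').
  assert (Phi (L * y) < Phi (L * y')) by (apply Phi_lt; nra).
  destruct (Req_dec g 1) as [-> | g_ne1]; [lra |].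
  assert (0 < 1 - g) by lra.
  nra.
Qed.

Lemma Phi_mixture_lt_L_pos (g L L' y : R) :
  0 <= g < 1 -> 0 < y -> L < L' -> Phi_mixture g L y < Phi_mixture g L' y.
Proof.
  intros g01 y0 LL'. unfold Phi_mixture.
  assert (Phi (L * y) < Phi (L' * y)) by (apply Phi_lt; nra).
  nra.
Qed.

Lemma Phi_mixture_lt_L_neg (g L L' y : R) :
  0 <= g < 1 -> y < 0 -> L < L' -> Phi_mixture g L' y < Phi_mixture g L y.
Proof.
  intros g01 y0 LL'. unfold Phi_mixture.
  assert (Phi (L' * y) < Phi (L * y)) by (apply Phi_lt; nra).
  nra.
Qed.

Lemma gamma_ratio_bounds (r nu t : R) :
  0 < t -> t < r - nu -> 0 < gamma_ratio r nu t < 1.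
Proof.
  intros t0 t1. unfold gamma_ratio. split.
  - apply Rdiv_lt_0_compat; lra.
  - apply (Rmult_lt_reg_r (r - nu)); [lra |].
    unfold Rdiv; rewrite Rmult_assoc, Rinv_l; lra.
Qed.

Theorem theorem3 (r c nu t rho : R) (Y : nat -> R)
  (Hcr : c < r) (Hnuc : nu < c) (Ht0 : 0 < t) (Ht1 : t < r - nu)
  (Hrho0 : 0 <= rho) (Hrho1 : rho < 1)
  (HY : forall n : nat, (1 <= n)%nat ->
        crit_ratio r c nu =
        gamma_ratio r nu t * Phi (Y n)
        + (1 - gamma_ratio r nu t) * Phi (L_n rho n * Y n)) :
  (crit_ratio r c nu > 1 / 2 ->
     (forall n : nat, (1 <= n)%nat -> Y (S n) < Y n) /\
     (forall n : nat, (1 <= n)%nat -> 0 < Y n)) /\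
  (crit_ratio r c nu < 1 / 2 ->
     (forall n : nat, (1 <= n)%nat -> Y n < Y (S n)) /\
     (forall n : nat, (1 <= n)%nat -> Y n < 0)).
Proof.
  pose proof (gamma_ratio_bounds r nu t Ht0 Ht1) as g01.
  set (g := gamma_ratio r nu t) in *.
  set (f n := Phi_mixture g (L_n rho n)).
  assert (f_incr : forall n, (1 <= n)%nat -> forall y y', y < y' -> f n y < f n y')
    by (intros n n1 y y'; apply Phi_mixture_lt; [lra | apply L_n_pos; auto]).
  assert (f_Y : forall n, (1 <= n)%nat -> f n (Y n) = crit_ratio r c nu)
    by (intros n n1; symmetry; apply HY, n1).
  assert (f_0 : forall n, f n 0 = / 2) by (intros n; apply Phi_mixture_0).
  split; intros R_half.
  - assert (Y_pos : forall n, (1 <= n)%nat -> 0 < Y n).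
    { intros n n1. apply (increasing_reflect_lt (f n)); [exact (f_incr n n1) |].
      rewrite f_0, f_Y by exact n1; lra. }
    split; [| exact Y_pos]. intros n n1.
    apply (increasing_reflect_lt (f (S n))); [apply f_incr; lia |].
    rewrite f_Y, <- (f_Y n n1) by lia.
    apply Phi_mixture_lt_L_pos; [lra | apply Y_pos, n1 | apply L_n_lt_succ; auto].
  - assert (Y_neg : forall n, (1 <= n)%nat -> Y n < 0).
    { intros n n1. apply (increasing_reflect_lt (f n)); [exact (f_incr n n1) |].
      rewrite f_0, f_Y by exact n1; lra. }
    split; [| exact Y_neg]. intros n n1.
    apply (increasing_reflect_lt (f (S n))); [apply f_incr; lia |].
    rewrite f_Y, <- (f_Y n n1) by lia.
    apply Phi_mixture_lt_L_neg; [lra | apply Y_neg, n1 | apply L_n_lt_succ; auto].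
Qed.
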